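(* Let $\mathcal{S}$ be a countably intersected family of subsets of a set $\Gamma$ and let $s_1,\dots,s_n\in\mathcal{S}$. Then there exists a pairwise disjoint family $t_1,\dots,t_l\in\mathcal{S}$ such that each $t_j$ is contained in some $s_i$ and $\bigcup_{i=1}^n s_i=\bigcup_{j=1}^l t_j$.
   Context: A family $\mathcal{S}$ of subsets of $\Gamma$ is countably intersected (C.I.) if: (a) $\mathcal{S}$ consists of countable subsets of $\Gamma$, contains all singletons, and is pointwise closed, i.e. $\{\chi_s : s\in\mathcal{S}\}$ is closed in $\{0,1\}^{\Gamma}$; (b) for all $s,t\in\mathcal{S}$, the set $s\setminus t$ is a finite union of pairwise disjoint elements of $\mathcal{S}$; (c) to every $t\in\mathcal{S}$ one can assign $s_t\in\mathcal{S}$ with $t\subseteq s_t$ such that for all $s,t_1,\dots,t_n\in\mathcal{S}$ there exists $t\in\mathcal{S}$ with $t\subseteq s\setminus\bigcup_{i=1}^n s_{t_i}$ and $s\setminus\big(\bigcup_{i=1}^n s_{t_i}\cup t\big)$ finite; (d) for every $s\in\mathcal{S}$ the set $\{s\cap t: t\in\mathcal{S}\}$ is countable. *)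

From Stdlib Require Import List.
Import ListNotations.

Definition subset {T : Type} (A B : T -> Prop) : Prop := forall x, A x -> B x.

Definition countable_set {X : Type} (A : X -> Prop) : Prop :=
  exists f : X -> nat, forall x y, A x -> A y -> f x = f y -> x = y.

Definition list_union {G : Type} (l : list (G -> Prop)) : G -> Prop :=
  fun x => exists t, In t l /\ t x.

Definition pairwise_disjoint {G : Type} (l : list (G -> Prop)) : Prop :=
  forall i j, i < length l -> j < length l -> i <> j ->
    forall x, nth i l (fun _ => False) x -> nth j l (fun _ => False) x -> False.

(* {chi_s : s in S} is closed in {0,1}^Gamma (product topology):
   any A whose restriction to every finite set of points is matched by
   some member of S belongs to S. *)
Definition pointwise_closed {G : Type} (S : (G -> Prop) -> Prop) : Prop :=
  forall A : G -> Prop,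
    (forall F : list G, exists s, S s /\ forall x, In x F -> (s x <-> A x)) ->
    S A.

Definition set_eq {G : Type} (A B : G -> Prop) : Prop := forall x, A x <-> B x.

Definition countably_intersected {G : Type} (S : (G -> Prop) -> Prop) : Prop :=
  (forall s, S s -> countable_set s) /\
  (forall g : G, S (fun x => x = g)) /\
  pointwise_closed S /\
  (forall s t, S s -> S t ->
     exists l : list (G -> Prop), (forall u, In u l -> S u) /\ pairwise_disjoint l /\
       set_eq (fun x => s x /\ ~ t x) (list_union l)) /\
  (exists st : (G -> Prop) -> (G -> Prop),
     (forall t, S t -> S (st t) /\ subset t (st t)) /\
     forall s (ts : list (G -> Prop)), S s -> (forall t, In t ts -> S t) ->
       exists t, S t /\
         subset t (fun x => s x /\ ~ list_union (map st ts) x) /\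
         exists F : list G, forall x,
           (s x /\ ~ list_union (map st ts) x /\ ~ t x) -> In x F) /\
  (forall s, S s ->
     exists e : nat -> (G -> Prop),
       forall t, S t -> exists n, set_eq (e n) (fun x => s x /\ t x)).

From Stdlib Require Import List Classical Lia.
Import ListNotations.

(* Only axiom (b) is used.  By (b), removing a member t of S from a finite disjoint
   union of members of S leaves such a union again, obtained piece by piece; iterating
   removes any finite union.  A disjoint refinement of s_1 u ... u s_n follows by
   induction on n: keep a refinement of s_2 u ... u s_n and add a disjoint
   decomposition of s_1 \ (s_2 u ... u s_n). *)

Definition disjoint {G : Type} (a b : G -> Prop) : Prop := forall x, a x -> b x -> False.

Definition finer {G : Type} (l' l : list (G -> Prop)) : Prop :=
  forall v, In v l' -> exists u, In u l /\ subset v u.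

Lemma ForallOrdPairs_app {A : Type} (R : A -> A -> Prop) (l1 l2 : list A) :
  ForallOrdPairs R l1 -> ForallOrdPairs R l2 ->
  (forall a b, In a l1 -> In b l2 -> R a b) -> ForallOrdPairs R (l1 ++ l2).
Proof.
  induction 1 as [|a l1 Ha _ IH]; intros H2 H12; simpl; auto.
  constructor.
  - apply Forall_app; split; auto.
    apply Forall_forall; intros b Hb; apply H12; simpl; auto.
  - apply IH; auto; intros; apply H12; simpl; auto.
Qed.

Lemma pairwise_disjoint_ForallOrdPairs {G : Type} (l : list (G -> Prop)) :
  pairwise_disjoint l <-> ForallOrdPairs disjoint l.
Proof.
  split.
  - induction l as [|a l IH]; intro H; constructor.
    + apply Forall_forall; intros b Hb x Ha Hbx.
      destruct (In_nth l b (fun _ => False) Hb) as [n [Hn <-]].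
      apply (H 0 (S n)) with x; simpl; auto; lia.
    + apply IH; intros i j Hi Hj Hij x.
      apply (H (S i) (S j)); simpl; lia.
  - induction 1 as [|a l Ha _ IH]; intros i j Hi Hj Hij x; simpl in *; [lia|].
    rewrite Forall_forall in Ha.
    destruct i as [|i], j as [|j]; try congruence.
    + apply Ha, nth_In; lia.
    + intros Hi' Hj'; apply (Ha (nth i l (fun _ => False))) with x; auto.
      apply nth_In; lia.
    + apply IH; lia.
Qed.

Lemma list_union_app {G : Type} (l1 l2 : list (G -> Prop)) :
  set_eq (list_union (l1 ++ l2)) (fun x => list_union l1 x \/ list_union l2 x).
Proof.
  intro x; unfold list_union; split.
  - intros [t [Ht Htx]]; apply in_app_or in Ht as [Ht|Ht]; eauto.
  - intros [[t [Ht Htx]]|[t [Ht Htx]]]; exists t; split; auto; apply in_or_app; auto.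
Qed.

Lemma list_union_cons {G : Type} (a : G -> Prop) (l : list (G -> Prop)) :
  set_eq (list_union (a :: l)) (fun x => a x \/ list_union l x).
Proof.
  intro x; unfold list_union; simpl; split.
  - intros [t [[<-|Ht] Htx]]; eauto.
  - intros [Hax|[t [Ht Htx]]]; eauto.
Qed.

Lemma finer_trans {G : Type} (l'' l' l : list (G -> Prop)) :
  finer l'' l' -> finer l' l -> finer l'' l.
Proof.
  intros H1 H2 w Hw.
  destruct (H1 w Hw) as [v [Hv Hwv]]; destruct (H2 v Hv) as [u [Hu Hvu]].
  exists u; split; auto; intros x Hx; auto.
Qed.

Lemma finer_incl {G : Type} (l' l : list (G -> Prop)) : incl l' l -> finer l' l.
Proof. intros H v Hv; exists v; split; auto; intros x Hx; exact Hx. Qed.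

Lemma finer_app {G : Type} (l1 l2 l : list (G -> Prop)) :
  finer l1 l -> finer l2 l -> finer (l1 ++ l2) l.
Proof. intros H1 H2 v Hv; apply in_app_or in Hv as [Hv|Hv]; auto. Qed.

Lemma finer_union {G : Type} (l' l : list (G -> Prop)) :
  finer l' l -> subset (list_union l') (list_union l).
Proof.
  intros H x [v [Hv Hvx]]; destruct (H v Hv) as [u [Hu Hvu]]; exists u; auto.
Qed.

Section DisjointRefinement.

Variables (G : Type) (S : (G -> Prop) -> Prop).

Hypothesis diff_decomposable : forall s t, S s -> S t ->
  exists l : list (G -> Prop), (forall u, In u l -> S u) /\ pairwise_disjoint l /\
    set_eq (fun x => s x /\ ~ t x) (list_union l).

Lemma disjoint_decomposition_diff (l : list (G -> Prop)) (t : G -> Prop) :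
  Forall S l -> ForallOrdPairs disjoint l -> S t ->
  exists l', Forall S l' /\ ForallOrdPairs disjoint l' /\ finer l' l /\
    set_eq (list_union l') (fun x => list_union l x /\ ~ t x).
Proof.
  intros HSl Hl Ht; induction Hl as [|u l Hu Hl IH].
  - exists []; split; [constructor|split; [constructor|split]].
    + intros ? [].
    + intro x; split; [intros [? [[] _]]|intros [[? [[] _]] _]].
  - apply Forall_cons_iff in HSl as [HSu HSl].
    destruct IH as [l' [HSl' [Hl' [Hfin Hunion]]]]; auto.
    destruct (diff_decomposable u t) as [lu [HSlu [Hlu Hunionu]]]; auto.
    rewrite pairwise_disjoint_ForallOrdPairs in Hlu.
    assert (Hfinu : finer lu (u :: l)).
    { intros v Hv; exists u; split; [now left|].
      intros x Hx; apply (proj2 (Hunionu x)); now exists v. }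
    exists (lu ++ l'); split; [|split; [|split; [|intro x; split]]].
    + apply Forall_app; split; auto; apply Forall_forall; auto.
    + apply ForallOrdPairs_app; auto.
      intros a b Ha Hb x Hax Hbx.
      assert (Hux : u x) by (apply (proj2 (Hunionu x)); now exists a).
      destruct (proj1 (Hunion x) (ex_intro _ b (conj Hb Hbx))) as [[w [Hw Hwx]] _].
      rewrite Forall_forall in Hu; exact (Hu w Hw x Hux Hwx).
    + apply finer_app; auto.
      apply finer_trans with l; auto; apply finer_incl, incl_tl, incl_refl.
    + intros Hx; apply list_union_app in Hx as [Hx|Hx].
      * apply Hunionu in Hx as [Hux Htx]; split; auto; apply list_union_cons; auto.
      * apply Hunion in Hx as [Hx Htx]; split; auto; apply list_union_cons; auto.
    + intros [Hx Htx]; apply list_union_app.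
      apply list_union_cons in Hx as [Hux|Hx].
      * left; apply Hunionu; auto.
      * right; apply Hunion; auto.
Qed.

Lemma disjoint_decomposition_diff_list (l ts : list (G -> Prop)) :
  Forall S l -> ForallOrdPairs disjoint l -> Forall S ts ->
  exists l', Forall S l' /\ ForallOrdPairs disjoint l' /\ finer l' l /\
    set_eq (list_union l') (fun x => list_union l x /\ ~ list_union ts x).
Proof.
  intros HSl Hl; induction 1 as [|t ts Ht _ IH].
  - exists l; split; [|split; [|split; [|intro x; split]]]; auto.
    + apply finer_incl, incl_refl.
    + intros Hx; split; auto; intros [? [[] _]].
    + tauto.
  - destruct IH as [l1 [HSl1 [Hl1 [Hfin1 Hunion1]]]].
    destruct (disjoint_decomposition_diff l1 t) as [l2 [HSl2 [Hl2 [Hfin2 Hunion2]]]]; auto.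
    exists l2; split; [|split; [|split; [|intro x; split]]]; auto.
    + apply finer_trans with l1; auto.
    + intros Hx; apply Hunion2 in Hx as [Hx Htx]; apply Hunion1 in Hx as [Hx Htsx].
      split; auto; intros Hx'; apply list_union_cons in Hx' as [?|?]; auto.
    + intros [Hx Hn]; apply Hunion2; split.
      * apply Hunion1; split; auto; intros Hx'; apply Hn, list_union_cons; auto.
      * intros Htx; apply Hn, list_union_cons; auto.
Qed.

Lemma disjoint_refinement (ss : list (G -> Prop)) :
  Forall S ss ->
  exists ts, Forall S ts /\ ForallOrdPairs disjoint ts /\ finer ts ss /\
    set_eq (list_union ss) (list_union ts).
Proof.
  induction 1 as [|s rest Hs Hrest IH].
  - exists []; split; [constructor|split; [constructor|split]].
    + intros ? [].
    + intro x; split; intros [? [[] _]].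
  - destruct IH as [ts' [HSts' [Hts' [Hfin' Hunion']]]].
    destruct (disjoint_decomposition_diff_list [s] rest) as [l [HSl [Hl [Hfin Hunion]]]];
      repeat constructor; auto.
    exists (l ++ ts'); split; [|split; [|split; [|intro x; split]]].
    + apply Forall_app; auto.
    + apply ForallOrdPairs_app; auto.
      intros a b Ha Hb x Hax Hbx.
      destruct (proj1 (Hunion x) (ex_intro _ a (conj Ha Hax))) as [_ Hn].
      apply Hn, Hunion'; now exists b.
    + apply finer_app.
      * apply finer_trans with [s]; auto; apply finer_incl, incl_cons; simpl; auto.
        apply incl_nil_l.
      * apply finer_trans with rest; auto; apply finer_incl, incl_tl, incl_refl.
    + intros Hx; apply list_union_app; apply list_union_cons in Hx as [Hsx|Hx].
      * destruct (classic (list_union rest x)) as [Hx|Hx].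
        -- right; apply Hunion'; auto.
        -- left; apply Hunion; split; auto; apply list_union_cons; auto.
      * right; apply Hunion'; auto.
    + intros Hx; apply list_union_cons; apply list_union_app in Hx as [Hx|Hx].
      * apply Hunion in Hx as [Hx _]; apply list_union_cons in Hx as [Hx|[? [[] _]]]; auto.
      * right; apply Hunion'; auto.
Qed.

End DisjointRefinement.

Theorem lemma1p3 (G : Type) (S : (G -> Prop) -> Prop)
  (HS : countably_intersected S) (ss : list (G -> Prop))
  (Hss : forall s, In s ss -> S s) :
  exists ts : list (G -> Prop),
    (forall t, In t ts -> S t) /\
    pairwise_disjoint ts /\
    (forall t, In t ts -> exists s, In s ss /\ subset t s) /\
    set_eq (list_union ss) (list_union ts).
Proof.
  destruct HS as (_ & _ & _ & diff_decomposable & _).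
  destruct (disjoint_refinement G S diff_decomposable ss) as (ts & HSts & Hts & Hfin & Hunion).
  - now apply Forall_forall.
  - exists ts; split; [now apply Forall_forall|split; [|split]]; auto.
    now apply pairwise_disjoint_ForallOrdPairs.
Qed.
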